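(* Let $A$ be a UFD containing $\mathbb{Q}$, $K=\operatorname{frac}(A)$, $B=A^{[n]}$ and $D\in\operatorname{LND}_A(B)$. Let $D_K$ be the extension of $D$ to $K^{[n]}$. If $D$ is irreducible, then $D_K$ is irreducible.
   Context: $A^{[n]}$ denotes the polynomial ring in $n$ variables over $A$; $\operatorname{LND}_A(B)$ is the set of locally nilpotent $A$-derivations of $B$. A derivation $D$ of a domain $R$ is reducible if $D(R)\subset fR$ for some non-unit $f\in R$, and irreducible otherwise. *)

From HB Require Import structures.
From mathcomp Require Import all_boot all_order all_algebra.
Set Implicit Arguments. Unset Strict Implicit. Unset Printing Implicit Defensive.
Import GRing.Theory.
Local Open Scope ring_scope.

(* Polynomial ring A^[n] in n variables, realised as iterated univariate
   polynomials: A^[0] = A, A^[n+1] = (A^[n])[X]. *)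
Fixpoint mpoly (R : idomainType) (n : nat) : idomainType :=
  if n is n'.+1 then ({poly mpoly R n'} : idomainType) else R.

Fixpoint mconst (R : idomainType) (n : nat) : R -> mpoly R n :=
  match n return R -> mpoly R n with
  | 0 => fun a => a
  | n'.+1 => fun a => (@mconst R n' a)%:P
  end.

Fixpoint mmap (R S : idomainType) (f : R -> S) (n : nat) : mpoly R n -> mpoly S n :=
  match n return mpoly R n -> mpoly S n with
  | 0 => f
  | n'.+1 => fun p => map_poly (@mmap R S f n') p
  end.

Definition dvdr (R : comNzRingType) (a b : R) : Prop := exists c, b = a * c.

Definition irreducible_elt (R : idomainType) (a : R) : Prop :=
  a != 0 /\ a \isn't a GRing.unit /\
  forall b c : R, a = b * c -> b \is a GRing.unit \/ c \is a GRing.unit.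

Definition prime_elt (R : idomainType) (p : R) : Prop :=
  p != 0 /\ p \isn't a GRing.unit /\
  forall a b : R, dvdr p (a * b) -> dvdr p a \/ dvdr p b.

Definition UFD (R : idomainType) : Prop :=
  (forall a : R, a != 0 -> a \isn't a GRing.unit ->
     exists s : seq R, (forall x, x \in s -> irreducible_elt x) /\ a = \prod_(x <- s) x)
  /\ (forall p : R, irreducible_elt p -> prime_elt p).

(* R contains Q: every positive integer is invertible in R *)
Definition contains_Q (R : idomainType) : Prop :=
  forall m : nat, (m.+1)%:R \is a (@GRing.unit R).

Definition is_derivation_over (A B : comNzRingType) (iota : A -> B) (D : B -> B) : Prop :=
  (forall x y, D (x + y) = D x + D y) /\
  (forall x y, D (x * y) = x * D y + D x * y) /\
  (forall a, D (iota a) = 0).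

Definition locally_nilpotent (B : nzRingType) (D : B -> B) : Prop :=
  forall b, exists m : nat, iter m D b = 0.

Definition LND_over (A B : comNzRingType) (iota : A -> B) (D : B -> B) : Prop :=
  is_derivation_over iota D /\ locally_nilpotent D.

Definition reducible_der (R : idomainType) (D : R -> R) : Prop :=
  exists f : R, f \isn't a GRing.unit /\ forall r, dvdr f (D r).

Definition irreducible_der (R : idomainType) (D : R -> R) : Prop :=
  ~ reducible_der D.

(* Suppose D_K(K^[n]) lies in f K^[n] for a
   nonunit f.  Clearing denominators, d f = g with g in B and d in A
   nonzero, and every D b satisfies c D b = g h for some nonzero c in A and
   h in B ("g divides D up to constants").  By Gauss's lemma the primes of A
   stay prime in B, so either g divides every D b (and g is the required
   nonunit, since it is not even a unit over K), or a prime p of A divides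
   g in B; then g / p again divides D up to constants, and the number of
   prime factors of the leading coefficient of g decreases.  This descent
   shows that D is reducible. *)

From HB Require Import structures.
From mathcomp Require Import all_boot all_order all_algebra.
From mathcomp Require Import ring zify.
From Stdlib Require Import Classical.
Set Implicit Arguments. Unset Strict Implicit. Unset Printing Implicit Defensive.
Import GRing.Theory.
Local Open Scope ring_scope.

Section Divisibility.
Variable R : idomainType.
Implicit Types a b g p u z : R.

Lemma dvdr0 p : dvdr p 0. Proof. by exists 0; rewrite mulr0. Qed.

Lemma dvdrB p a b : dvdr p a -> dvdr p b -> dvdr p (a - b).
Proof. by move=> [x ->] [y ->]; exists (x - y); rewrite mulrBr. Qed.

Lemma dvdrMr p a b : dvdr p a -> dvdr p (a * b).
Proof. by move=> [x ->]; exists (x * b); rewrite mulrA. Qed.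

Lemma dvdr_unit p : dvdr p 1 -> p \is a GRing.unit.
Proof. by move=> [x hx]; apply/unitrPr; exists x. Qed.

Lemma prime_dvd_prod p (s : seq R) : prime_elt p ->
  dvdr p (\prod_(x <- s) x) -> exists2 x, x \in s & dvdr p x.
Proof.
move=> hp; elim: s => [|y s IH].
  by rewrite big_nil => /dvdr_unit pu; case: hp => _ [/negP].
rewrite big_cons => /(proj2 (proj2 hp)) [h|/IH [x xs hx]].
  by exists y; rewrite ?mem_head.
by exists x; rewrite ?in_cons ?xs ?orbT.
Qed.

(* Multiplying by a prime not dividing g does not help to become divisible
   by g: this is how constants are cancelled from g * h = c * D b. *)
Lemma dvdr_cancel_prime p g z : prime_elt p -> ~ dvdr p g ->
  dvdr g (p * z) -> dvdr g z.
Proof.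
move=> hp npg [h e].
have [//|[h' eh]] : dvdr p g \/ dvdr p h by apply: (proj2 (proj2 hp)); exists z.
exists h'; apply: (mulfI (proj1 hp)).
by rewrite e eh mulrCA.
Qed.

Lemma dvdr_cancel_unit u g z : u \is a GRing.unit ->
  dvdr g (u * z) -> dvdr g z.
Proof. by move=> uu [h e]; exists (u^-1 * h); rewrite mulrCA -e mulKr. Qed.
End Divisibility.

(* Gauss's lemma in the form needed here: a prime constant p of R stays
   prime in R[X].  Writing [dvd_coefs p q] for "p divides every coefficient
   of q", one shows by induction on size a + size b that p | coefs(a * b)
   forces p | coefs(a) or p | coefs(b): if p divides a_0 (or b_0) one strips
   that constant term and recurses, otherwise p does not divide a_0 * b_0. *)
Section GaussLemma.
Variable R : idomainType.
Variable p : R.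
Hypothesis p_prime : prime_elt p.

Definition dvd_coefs (q : {poly R}) : Prop := forall i, dvdr p q`_i.

Lemma dvdr_polyC (q : {poly R}) : dvdr p%:P q <-> dvd_coefs q.
Proof.
split; first by move=> [c ->] i; rewrite coefCM; exists c`_i.
move=> hq.
have quot i : exists c, q`_i == p * c by case: (hq i) => c hc; exists c; apply/eqP.
exists (\poly_(i < size q) xchoose (quot i)).
apply/polyP => i; rewrite coefCM coef_poly.
case: ltnP => hi; first exact/eqP/(xchooseP (quot i)).
by rewrite mulr0 nth_default.
Qed.

Lemma poly_split0 (a : {poly R}) : a = (a`_0)%:P + drop_poly 1 a * 'X.
Proof.
have -> : (a`_0)%:P = take_poly 1 a.
  by apply/polyP => -[|i]; rewrite coef_take_poly coefC.
by rewrite -[in RHS](expr1 'X) poly_take_drop.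
Qed.

(* If p divides a_0 and all coefficients of a * b, it divides all
   coefficients of (a - a_0) / X * b, since (a b)_(i+1) = a_0 b_(i+1) + ... *)
Lemma dvd_coefs_drop (a b : {poly R}) : dvdr p a`_0 -> dvd_coefs (a * b) ->
  dvd_coefs (drop_poly 1 a * b).
Proof.
move=> h0 hab i.
have E : (a * b)`_i.+1 = a`_0 * b`_i.+1 + (drop_poly 1 a * b)`_i.
  rewrite {1}(poly_split0 a) mulrDl coefD coefCM.
  by rewrite -mulrA [_ * b]mulrC mulrA coefMX.
have -> : (drop_poly 1 a * b)`_i = (a * b)`_i.+1 - a`_0 * b`_i.+1.
  by rewrite E addrC addKr.
by apply: dvdrB => //; apply: dvdrMr.
Qed.

Lemma dvd_coefs_undrop (a : {poly R}) : dvdr p a`_0 ->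
  dvd_coefs (drop_poly 1 a) -> dvd_coefs a.
Proof. by move=> h0 h [|i] //; have := h i; rewrite coef_drop_poly addn1. Qed.

Lemma dvd_coefsM (a b : {poly R}) :
  dvd_coefs (a * b) -> dvd_coefs a \/ dvd_coefs b.
Proof.
move: {2}(size a + size b)%N (leqnn (size a + size b)) => k.
elim: k a b => [|k IH] a b hs hab.
  left => i; move: hs; rewrite leqn0 addn_eq0 size_poly_eq0 => /andP [/eqP -> _].
  by rewrite coef0; apply: dvdr0.
have [->|a0] := eqVneq a 0; first by left => i; rewrite coef0; apply: dvdr0.
have [->|b0] := eqVneq b 0; first by right => i; rewrite coef0; apply: dvdr0.
have [ha|na] := classic (dvdr p a`_0).
  have hsz : (size (drop_poly 1 a) + size b <= k)%N.
    by rewrite size_drop_poly; move: hs a0; rewrite -size_poly_eq0; lia.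
  case: (IH _ _ hsz (dvd_coefs_drop ha hab)) => h; last by right.
  by left; apply: dvd_coefs_undrop.
have [hb|nb] := classic (dvdr p b`_0).
  have hsz : (size (drop_poly 1 b) + size a <= k)%N.
    by rewrite size_drop_poly; move: hs b0; rewrite -size_poly_eq0; lia.
  rewrite mulrC in hab.
  case: (IH _ _ hsz (dvd_coefs_drop hb hab)) => h; last by left.
  by right; apply: dvd_coefs_undrop.
by have := hab 0%N; rewrite coef0M => /(proj2 (proj2 p_prime)) [].
Qed.

Lemma prime_polyC : prime_elt (p%:P : {poly R}).
Proof.
case: p_prime => p0 [pu _]; split; first by rewrite polyC_eq0.
split.
  apply: contra pu; rewrite poly_unitE coefC /=.
  by case/andP.
move=> a b /dvdr_polyC /dvd_coefsM [] h; [left | right]; exact/dvdr_polyC.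
Qed.
End GaussLemma.

Section IteratedPolynomials.
Variable R : idomainType.

Lemma mconstM n (a b : R) : mconst n (a * b) = mconst n a * mconst n b.
Proof. by elim: n => [|n IH] //=; rewrite IH polyCM. Qed.

Lemma mconst1 n : mconst n (1 : R) = 1.
Proof. by elim: n => [|n IH] //=; rewrite IH. Qed.

Lemma mconst_unit n (u : R) : u \is a GRing.unit -> mconst n u \is a GRing.unit.
Proof.
move=> uu; apply/unitrPr; exists (mconst n u^-1).
by rewrite -mconstM mulrV // mconst1.
Qed.

Lemma prime_mconst n (p : R) : prime_elt p -> prime_elt (mconst n p).
Proof. by elim: n => [|n IH] //= hp; apply: prime_polyC; apply: IH. Qed.

Fixpoint mlead (n : nat) : mpoly R n -> R :=
  match n return mpoly R n -> R with
  | 0 => fun x => x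
  | n'.+1 => fun q => mlead (lead_coef q)
  end.

Lemma mleadM n (x y : mpoly R n) : mlead (x * y) = mlead x * mlead y.
Proof. by elim: n x y => [|n IH] x y //=; rewrite lead_coefM IH. Qed.

Lemma mlead_mconst n (a : R) : mlead (mconst n a) = a.
Proof. by elim: n => [|n IH] //=; rewrite lead_coefC IH. Qed.

Lemma mlead_eq0 n (x : mpoly R n) : (mlead x == 0) = (x == 0).
Proof. by elim: n x => [|n IH] x //=; rewrite IH lead_coef_eq0. Qed.
End IteratedPolynomials.

Section FractionField.
Variable A : idomainType.
Local Notation K := {fraction A}.

Lemma frac_clear (x : K) :
  exists2 d : A, d != 0 & exists a : A, tofrac d * x = tofrac a.
Proof.
elim/quotW: x => r.
exists (frac r).2; first exact: denom_ratioP.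
exists (frac r).1.
unlock FracField.tofrac; apply: (etrans (esym (FracField.pi_mul _ _))).
apply/eqmodP; rewrite /= FracField.equivfE /FracField.mulf /=.
rewrite !numden_Ratio ?mulf_neq0 ?oner_eq0 ?denom_ratioP //.
by rewrite mulr1 mul1r.
Qed.

Fixpoint mfrac (n : nat) : {rmorphism mpoly A n -> mpoly K n} :=
  match n return {rmorphism mpoly A n -> mpoly K n} with
  | 0 => (@tofrac A : {rmorphism A -> K})
  | n'.+1 => (map_poly (mfrac n') : {rmorphism {poly mpoly A n'} -> {poly mpoly K n'}})
  end.

Lemma mmap_tofracE n x : @mmap A K (@tofrac A) n x = mfrac n x.
Proof. by elim: n x => [|n IH] x //=; apply: eq_map_poly. Qed.

Lemma mfrac_inj n : injective (mfrac n).
Proof.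
elim: n => [|n IH] /=; first by move=> x y /eqP; rewrite tofrac_eq => /eqP.
by apply: map_inj_poly => //; rewrite rmorph0.
Qed.

Lemma mfrac_mconst n (a : A) : mfrac n (mconst n a) = mconst n (tofrac a).
Proof. by elim: n => [|n IH] //=; rewrite map_polyC; congr (_%:P); exact: IH. Qed.

Lemma mfrac_mconst_unit n (a : A) : a != 0 ->
  mconst n (tofrac a) \is a GRing.unit.
Proof. by move=> a0; apply: mconst_unit; rewrite unitfE tofrac_eq0. Qed.

Lemma clear_denominators n (X : mpoly K n) :
  exists2 d : A, d != 0 & exists g, mconst n (tofrac d) * X = mfrac n g.
Proof.
elim: n X => [|n IH] X; first exact: frac_clear.
elim/poly_ind: X => [|Y c [d1 d10 [g1 h1]]].
  by exists 1; rewrite ?oner_eq0 //; exists 0; rewrite mulr0 rmorph0.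
case: (IH c) => d2 d20 [g2 h2].
exists (d1 * d2); first by rewrite mulf_neq0.
exists ((mconst n d2)%:P * g1 * 'X + (mconst n d1 * g2)%:P).
rewrite /= in h1 |- *.
rewrite rmorphD !rmorphM /= map_polyX !map_polyC /= !mfrac_mconst -h1 -h2.
rewrite mconstM !polyCM.
ring.
Qed.
End FractionField.

(* Dividing by a prime lowers the
   count, which makes it a termination measure for the descent below. *)
Section Factorisation.
Variable A : idomainType.
Hypothesis HUFD : UFD A.

Definition factor_count (a : A) (k : nat) : Prop :=
  exists s : seq A, size s = k /\ (forall x, x \in s -> irreducible_elt x) /\
    exists2 u, u \is a GRing.unit & a = u * \prod_(x <- s) x.

Lemma factor_count_exists (a : A) : a != 0 -> exists k, factor_count a k.
Proof.
move=> a0; have [au|anu] := boolP (a \is a GRing.unit).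
  by exists 0%N, [::]; split=> //; split=> //; exists a; rewrite ?big_nil ?mulr1.
case: (proj1 HUFD a a0 anu) => s [hs ->].
by exists (size s), s; split=> //; split=> //; exists 1; rewrite ?unitr1 ?mul1r.
Qed.

Lemma factor_count_prime (p a : A) k : prime_elt p ->
  factor_count (p * a) k -> (0 < k)%N /\ factor_count a k.-1.
Proof.
move=> hp [s [<- [hirr [u hu hpa]]]].
have : dvdr p (\prod_(x <- s) x).
  by exists (u^-1 * a); rewrite mulrCA hpa mulrA mulVr ?mul1r.
move=> /(prime_dvd_prod hp) [x xs [v xv]].
have vu : v \is a GRing.unit.
  case: (proj2 (proj2 (hirr x xs)) _ _ xv) => // pu.
  by case: hp => _ [/negP].
split; first by case: s xs {hirr hpa}.
exists (rem x s); split; first by rewrite size_rem.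
split; first by move=> y /mem_rem; apply: hirr.
exists (u * v); first by rewrite unitrM hu vu.
apply: (mulfI (proj1 hp)).
rewrite hpa (big_rem x xs) /= xv.
ring.
Qed.

(* If no prime of A divides g in A^[n], then g divides x as soon as it
   divides c * x for some nonzero constant c: factor c into primes and
   cancel them one at a time. *)
Lemma dvdr_cancel_mconst n (g x : mpoly A n) (c : A) :
  (forall p, prime_elt p -> ~ dvdr (mconst n p) g) -> c != 0 ->
  dvdr g (mconst n c * x) -> dvdr g x.
Proof.
move=> nog c0; have [cu|cnu] := boolP (c \is a GRing.unit).
  by apply: dvdr_cancel_unit; apply: mconst_unit.
case: (proj1 HUFD c c0 cnu) => s [hs ->] {c0 cnu}.
elim: s hs => [|y s IH] hs; first by rewrite big_nil mconst1 mul1r.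
have hy : prime_elt y by apply: (proj2 HUFD); apply: hs; rewrite mem_head.
rewrite big_cons mconstM -mulrA => /(dvdr_cancel_prime (prime_mconst n hy)).
move=> /(_ (nog y hy)); apply: IH => z zs; apply: hs.
by rewrite in_cons zs orbT.
Qed.
End Factorisation.

(* Either g divides all D b, or some prime p of A
   divides g; in the latter case g / p is again a divisor up to constants
   with fewer prime factors in its leading coefficient.  Hence, as long as
   g is not a unit over K, D is reducible. *)
Section Descent.
Variable A : idomainType.
Hypothesis HUFD : UFD A.
Variable n : nat.
Variable D : mpoly A n -> mpoly A n.

Definition dvd_der_upto_const (g : mpoly A n) : Prop :=
  forall b, exists2 c : A, c != 0 & dvdr g (mconst n c * D b).

(* If no prime of A divides g, the constants can all be cancelled. *)
Lemma upto_const_dichotomy g : dvd_der_upto_const g ->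
  (forall b, dvdr g (D b)) \/ exists2 p, prime_elt p & dvdr (mconst n p) g.
Proof.
move=> hg; have [hp|nop] := classic (exists2 p, prime_elt p & dvdr (mconst n p) g).
  by right.
left=> b; case: (hg b) => c c0 hc; apply: (dvdr_cancel_mconst HUFD _ c0 hc).
by move=> p hp hpg; apply: nop; exists p.
Qed.

Lemma upto_const_cofactor u g : dvd_der_upto_const (u * g) ->
  dvd_der_upto_const g.
Proof.
move=> hg b; case: (hg b) => c c0 [h e]; exists c => //.
by exists (u * h); rewrite e mulrCA mulrA.
Qed.

Lemma reducible_of_unit_free_divisor g : mfrac A n g \isn't a GRing.unit ->
  (forall b, dvdr g (D b)) -> reducible_der D.
Proof. by move=> gu hall; exists g; split=> //; apply: contra gu; apply: rmorph_unit. Qed.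

Lemma upto_const_descent k : forall g, g != 0 -> factor_count (mlead g) k ->
  mfrac A n g \isn't a GRing.unit -> dvd_der_upto_const g -> reducible_der D.
Proof.
elim: k => [|k IH] g g0 gk gu hg.
all: case: (upto_const_dichotomy hg) => [|[p hp [g' eg]]];
  first exact: reducible_of_unit_free_divisor.
all: move: gk; rewrite eg mleadM mlead_mconst => /(factor_count_prime hp) [//= _ gk'].
have g'0 : g' != 0 by apply: contraNneq g0 => g'0; rewrite eg g'0 mulr0.
apply: (IH g' g'0 gk'); last by apply: (@upto_const_cofactor (mconst n p)); rewrite -eg.
apply: contra gu => hu.
by rewrite eg rmorphM mfrac_mconst unitrM hu andbT mfrac_mconst_unit ?(proj1 hp).
Qed.

(* The descent without the nonvanishing hypothesis: g = 0 forces D = 0. *)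
Lemma reducible_of_upto_const g : mfrac A n g \isn't a GRing.unit ->
  dvd_der_upto_const g -> reducible_der D.
Proof.
move=> gu hg; have [g0|g0] := eqVneq g 0; last first.
  have [k gk] : exists k, factor_count (mlead g) k.
    by apply: factor_count_exists; rewrite ?mlead_eq0.
  exact: (upto_const_descent g0 gk).
apply: (reducible_of_unit_free_divisor gu) => b.
case: (hg b) => c c0 [h]; rewrite g0 mul0r => /eqP.
rewrite mulf_eq0 => /orP [|/eqP ->]; last exact: dvdr0.
by rewrite -mlead_eq0 mlead_mconst (negbTE c0).
Qed.
End Descent.

Theorem lemma4p1 (A : idomainType) (n : nat)
  (HUFD : UFD A) (HQ : contains_Q A)
  (D : mpoly A n -> mpoly A n)
  (DK : mpoly {fraction A} n -> mpoly {fraction A} n) :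
  LND_over (@mconst A n) D ->
  is_derivation_over (@mconst {fraction A} n) DK ->
  (forall b, DK (@mmap A {fraction A} (@tofrac A) n b) = @mmap A {fraction A} (@tofrac A) n (D b)) ->
  irreducible_der D -> irreducible_der DK.
Proof.
move=> _ _ hDK hirr [f [fu hf]]; apply: hirr.
have hdiv b : dvdr f (mfrac A n (D b)) by rewrite -mmap_tofracE -hDK.
(* d f = g with g in B; g is not a unit over K since f is not. *)
have [d d0 [g eg]] := clear_denominators f.
apply: (@reducible_of_upto_const A HUFD n D g).
  by rewrite -eg unitrM negb_and fu orbT.
(* From D b = f q, clearing the denominator e of q gives d e D b = g h. *)
move=> b; have [q eq] := hdiv b.
have [e e0 [h eh]] := clear_denominators q.
exists (d * e); first by rewrite mulf_neq0.
exists h; apply: (@mfrac_inj A n).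
rewrite !rmorphM mfrac_mconst -eg -eh eq tofracM mconstM.
ring.
Qed.
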